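(* Let $A,B\in\mathbb{R}^{m\times n}$ with $m<n$ and $b\in\mathbb{R}^m$, and let $1\le p\le\infty$. Let $B = M_B - N_B$ with $\operatorname{rank}(M_B) =m$. If $M_B^\dagger b\leq0$, $M_B^\dagger (N_B + A) \geq 0$ and $\|M_B^\dagger (N_B + A)\|_p <1$, then the equation $Ax-B|x|=b$ has at least one nonnegative solution.
   Context: $M^\dagger$ is the Moore–Penrose inverse; $|x|$ is the entrywise absolute value; vector/matrix inequalities are entrywise; $\|\cdot\|_p$ on matrices is the operator norm induced by the vector $p$-norm. *)

From HB Require Import structures.
From mathcomp Require Import all_boot all_order all_algebra.
From mathcomp Require Import all_classical all_reals exp.
Set Implicit Arguments. Unset Strict Implicit. Unset Printing Implicit Defensive.
Import Order.TTheory GRing.Theory Num.Theory.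
Local Open Scope ring_scope.

Definition is_MP_inverse (R : realType) (m n : nat)
  (M : 'M[R]_(m, n)) (X : 'M[R]_(n, m)) : Prop :=
  [/\ M *m X *m M = M, X *m M *m X = X,
      (M *m X)^T = M *m X & (X *m M)^T = X *m M].

Definition vnorm (R : realType) (n : nat) (p : \bar R) (x : 'cV[R]_n) : R :=
  match p with
  | EFin q => (\sum_(i < n) `|x i 0| `^ q) `^ q^-1
  | +oo%E => \big[Num.max/0]_(i < n) `|x i 0|
  | -oo%E => 0
  end.

Definition opnorm (R : realType) (k n : nat) (p : \bar R) (C : 'M[R]_(k, n)) : R :=
  sup [set r : R | exists2 x : 'cV[R]_n, x != 0 & r = vnorm p (C *m x) / vnorm p x].

Definition mx_ge0 (R : realType) (k l : nat) (C : 'M[R]_(k, l)) : Prop :=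
  forall i j, 0 <= C i j.
Definition mx_le0 (R : realType) (k l : nat) (C : 'M[R]_(k, l)) : Prop :=
  forall i j, C i j <= 0.
Definition mx_abs (R : realType) (k l : nat) (C : 'M[R]_(k, l)) : 'M[R]_(k, l) :=
  map_mx (fun a => `|a|) C.

From HB Require Import structures.
From mathcomp Require Import all_boot all_order all_algebra.
From mathcomp Require Import all_classical all_reals exp.
From mathcomp Require Import lra.
Set Implicit Arguments. Unset Strict Implicit. Unset Printing Implicit Defensive.
Import Order.TTheory GRing.Theory Num.Theory.
Local Open Scope ring_scope.

(* With C := M_B^+ (N_B + A) and d := M_B^+ b, the hypothesis ||C||_p < 1
   makes 1 - C invertible, so x = C x - d has a solution.  Its negative part
   z satisfies 0 <= z <= C z because C >= 0 and d <= 0; as C strictly shrinks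
   the p-norm of every nonzero vector, z = 0 and x >= 0.  Finally M_B has full
   row rank, so M_B M_B^+ = 1 and x solves A x - (M_B - N_B) x = b, with
   |x| = x. *)

Section VectorNorm.
Variables (R : realType) (p : \bar R).
Hypothesis p_ge1 : (1%:E <= p)%E.

Lemma entry_le_vnorm (n : nat) (x : 'cV[R]_n) i : `|x i 0| <= vnorm p x.
Proof.
case: p p_ge1 => [q||] //=; last by move=> _; exact: le_bigmax.
rewrite lee_fin => q_ge1.
have q_neq0 : q != 0 by apply: lt0r_neq0; exact: lt_le_trans q_ge1.
have -> : `|x i 0| = (`|x i 0| `^ q) `^ q^-1.
  by rewrite -powRrM mulfV // powRr1.
apply: ge0_ler_powR; rewrite ?invr_ge0 ?(le_trans ler01 q_ge1) ?nnegrE ?powR_ge0 //.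
  by apply: sumr_ge0 => j _; exact: powR_ge0.
by rewrite (bigD1 i) //= lerDl; apply: sumr_ge0 => j _; exact: powR_ge0.
Qed.

Lemma vnorm_gt0 (n : nat) (x : 'cV[R]_n) : x != 0 -> 0 < vnorm p x.
Proof.
apply: contraNT; rewrite -leNgt => x_le0.
apply/eqP/matrixP => i j; rewrite ord1 mxE; apply/normr0_eq0/eqP.
by rewrite eq_le normr_ge0 andbT (le_trans (entry_le_vnorm x i)).
Qed.

Lemma le_vnorm (n : nat) (x y : 'cV[R]_n) :
  (forall i, `|x i 0| <= `|y i 0|) -> vnorm p x <= vnorm p y.
Proof.
move=> le_xy; case: p p_ge1 => [q||] //=.
- rewrite lee_fin => q_ge1; have q_ge0 := le_trans ler01 q_ge1.
  apply: ge0_ler_powR; rewrite ?invr_ge0 ?nnegrE //.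
  + by apply: sumr_ge0 => j _; exact: powR_ge0.
  + by apply: sumr_ge0 => j _; exact: powR_ge0.
  by apply: ler_sum => j _; apply: ge0_ler_powR; rewrite ?nnegrE.
- by move=> _; apply: le_bigmax2 => i _; exact: le_xy.
Qed.

Lemma vnorm_entry_bound (n : nat) : exists K : R, forall (x : 'cV[R]_n) c,
  0 <= c -> (forall i, `|x i 0| <= c) -> vnorm p x <= K * c.
Proof.
case: p p_ge1 => [q||] //=; last first.
  by move=> _; exists 1 => x c c_ge0 x_le; rewrite mul1r; apply: bigmax_le.
rewrite lee_fin => q_ge1; have q_ge0 := le_trans ler01 q_ge1.
have q_neq0 : q != 0 by apply: lt0r_neq0; exact: lt_le_trans q_ge1.
exists (n%:R `^ q^-1) => x c c_ge0 x_le.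
have -> : c = (c `^ q) `^ q^-1 by rewrite -powRrM mulfV // powRr1.
rewrite -powRM ?powR_ge0 //.
apply: ge0_ler_powR; rewrite ?invr_ge0 ?nnegrE ?mulr_ge0 ?powR_ge0 //.
  by apply: sumr_ge0 => j _; exact: powR_ge0.
apply: (@le_trans _ _ (\sum_(j < n) c `^ q)).
  by apply: ler_sum => j _; apply: ge0_ler_powR; rewrite ?nnegrE.
by rewrite sumr_const card_ord mulr_natl.
Qed.

Lemma vnorm_mulmx_ratio_bounded (k n : nat) (C : 'M[R]_(k, n)) :
  exists M : R, forall y : 'cV[R]_n, y != 0 -> vnorm p (C *m y) / vnorm p y <= M.
Proof.
have [K K_bound] := vnorm_entry_bound k.
set c := \sum_(i < k) \sum_(j < n) `|C i j|.
have c_ge0 : 0 <= c by apply: sumr_ge0 => i _; apply: sumr_ge0.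
exists (K * c) => y y_neq0; have y_gt0 := vnorm_gt0 y_neq0.
rewrite ler_pdivrMr // -mulrA; apply: K_bound; first exact: mulr_ge0 c_ge0 (ltW y_gt0).
move=> i.
rewrite mxE; apply: (le_trans (ler_norm_sum _ _ _)).
apply: (@le_trans _ _ (\sum_(j < n) `|C i j| * vnorm p y)).
  by apply: ler_sum => j _; rewrite normrM ler_wpM2l // entry_le_vnorm.
rewrite -mulr_suml ler_wpM2r ?(ltW y_gt0) // /c (bigD1 i) //= lerDl.
by apply: sumr_ge0 => l _; exact: sumr_ge0.
Qed.

Lemma vnorm_mulmx_ratio_le_opnorm (k n : nat) (C : 'M[R]_(k, n)) (x : 'cV[R]_n) :
  x != 0 -> vnorm p (C *m x) / vnorm p x <= opnorm p C.
Proof.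
move=> x_neq0; have [M M_bound] := vnorm_mulmx_ratio_bounded C.
apply: ub_le_sup; last by exists x.
by exists M => r [y y_neq0 ->]; exact: M_bound.
Qed.

Lemma vnorm_contraction (n : nat) (C : 'M[R]_n) (x : 'cV[R]_n) :
  opnorm p C < 1 -> x != 0 -> vnorm p (C *m x) < vnorm p x.
Proof.
move=> C_lt1 x_neq0.
have := le_lt_trans (vnorm_mulmx_ratio_le_opnorm C x_neq0) C_lt1.
by rewrite ltr_pdivrMr ?vnorm_gt0 // mul1r.
Qed.

Lemma unitmx_1_sub_contraction (n : nat) (C : 'M[R]_n) :
  opnorm p C < 1 -> 1%:M - C \in unitmx.
Proof.
move=> C_lt1; rewrite -unitmx_tr unitmxE unitfE; apply/det0P => -[v v_neq0 v_ker].
have Cv : C *m v^T = v^T.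
  apply/eqP; rewrite eq_sym -subr_eq0 -{1}[v^T]mul1mx -mulmxBl.
  by rewrite -[_ *m _]trmxK trmx_mul trmxK v_ker trmx0.
have vT_neq0 : v^T != 0 by rewrite -(inj_eq (@trmx_inj _ _ _)) trmxK trmx0.
by have := vnorm_contraction C_lt1 vT_neq0; rewrite Cv ltxx.
Qed.

Lemma contraction_fixpoint_ge0 (n : nat) (C : 'M[R]_n) (d x : 'cV[R]_n) :
  mx_ge0 C -> opnorm p C < 1 -> mx_le0 d -> x = C *m x - d -> mx_ge0 x.
Proof.
move=> C_ge0 C_lt1 d_le0 x_fix.
pose z := map_mx (fun a => Num.max (- a) 0) x.
have z_ge0 i : 0 <= z i 0 by rewrite mxE le_max lexx orbT.
have neg_le_z j : - x j 0 <= z j 0 by rewrite mxE le_max lexx.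
have z_le_Cz i : z i 0 <= (C *m z) i 0.
  have Cz_ge0 : 0 <= (C *m z) i 0.
    by rewrite mxE; apply: sumr_ge0 => j _; rewrite mulr_ge0.
  (* -x = C (-x) + d <= C z entrywise, since C >= 0 and d <= 0 *)
  have negx_le_Cz : - x i 0 <= (C *m z) i 0.
    rewrite {1}x_fix !mxE opprB -sumrN; have := d_le0 i 0.
    suff : \sum_j - (C i j * x j 0) <= \sum_j C i j * z j 0 by lra.
    by apply: ler_sum => j _; rewrite -mulrN ler_wpM2l.
  by rewrite mxE ge_max negx_le_Cz.
have z_eq0 : z = 0.
  case: (eqVneq z 0) => // z_neq0.
  have := vnorm_contraction C_lt1 z_neq0; rewrite ltNge le_vnorm // => i.
  by rewrite !ger0_norm ?(le_trans (z_ge0 i) (z_le_Cz i)).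
by move=> i j; rewrite ord1 -oppr_le0 (le_trans (neg_le_z i)) // z_eq0 mxE.
Qed.

Lemma contraction_fixpoint_exists (n : nat) (C : 'M[R]_n) (d : 'cV[R]_n) :
  opnorm p C < 1 -> exists x, x = C *m x - d.
Proof.
move=> C_lt1; exists (invmx (1%:M - C) *m - d).
set y := _ *m _; have : (1%:M - C) *m y = - d.
  by rewrite mulKVmx // unitmx_1_sub_contraction.
by rewrite mulmxBl mul1mx => <-; rewrite addrC subrK.
Qed.

End VectorNorm.

Lemma row_free_mulmx_ginv (R : fieldType) (m n : nat)
  (M : 'M[R]_(m, n)) (X : 'M[R]_(n, m)) :
  row_free M -> M *m X *m M = M -> M *m X = 1%:M.
Proof. by move=> M_free MXM; apply: (row_free_inj M_free); rewrite mul1mx. Qed.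

Theorem corollary3p4 (R : realType) (m n : nat)
  (A B MB NB : 'M[R]_(m, n)) (b : 'cV[R]_m) (p : \bar R)
  (MBp : 'M[R]_(n, m)) :
  (m < n)%N ->
  (1%:E <= p)%E ->
  B = MB - NB ->
  \rank MB = m ->
  is_MP_inverse MB MBp ->
  mx_le0 (MBp *m b) ->
  mx_ge0 (MBp *m (NB + A)) ->
  opnorm p (MBp *m (NB + A)) < 1 ->
  exists x : 'cV[R]_n, mx_ge0 x /\ A *m x - B *m mx_abs x = b.
Proof.
move=> _ p_ge1 -> rank_MB [MB_ginv _ _ _] d_le0 C_ge0 C_lt1.
have [x x_fix] := contraction_fixpoint_exists p_ge1 (MBp *m b) C_lt1.
have x_ge0 := contraction_fixpoint_ge0 p_ge1 C_ge0 C_lt1 d_le0 x_fix.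
exists x; split => //.
have -> : mx_abs x = x by apply/matrixP => i j; rewrite mxE ger0_norm.
have MB_x : MB *m x = (NB + A) *m x - b.
  rewrite {1}x_fix mulmxBr !mulmxA row_free_mulmx_ginv ?mul1mx //.
  by rewrite /row_free rank_MB.
by rewrite mulmxBl MB_x mulmxDl addrAC (addrC (NB *m x)) addrK opprB addrC subrK.
Qed.
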